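(* There exists a probabilistic database that has the finite moments property but is not in $\mathsf{FO}(\mathsf{TI})$.
   Context: Fix a countably infinite universe $U$. A database schema $\tau$ is a finite nonempty set of relation symbols with arities; a $\tau$-fact is an expression $R(u_1,\dots,u_{\mathrm{ar}(R)})$ with $R\in\tau$, $u_i\in U$; a $\tau$-instance is a finite set of $\tau$-facts, and $\mathrm{adom}(D)$ is the set of elements of $U$occurring in $D$. A probabilistic database (PDB) of schema $\tau$ is a discrete probability space $(\mathbb{D},P)$ where $\mathbb{D}$ is a nonempty countable set of $\tau$-instances. The instance size is the random variable $D\mapsto |D|$ (number of facts). A PDB has the finite moments property if $\mathbb{E}(|\cdot|^k)=\sum_{D\in\mathbb{D}}|D|^kP(\{D\})<\infty$ for all $k\in\mathbb{N}_+$. A PDB $\mathcal{I}$ is tuple-independent (TI) if for all $k$ and all pairwise distinct facts $f_1,\dots,f_k$, $\Pr_{I\sim\mathcal I}(f_1\in I,\dots,f_k\in I)=\prod_i\Pr_{I\sim\mathcal I}(f_i\in I)$; $\mathsf{TI}$ is the class of all TI-PDBs. A view $V$ maps instances of an input schema to instances of an output schema; the image of a PDB $(\mathbb D,P)$ under $V$ is the PDB on $V(\mathbb D)$ with $P'(\{D'\})=P(\{D\in\mathbb D: V(D)=D'\})$. An FO-view consists of one first-order formula $\Phi_R(x_1,\dots,x_{\mathrm{ar}(R)})$ (constants from $U$ allowed) per output relation symbol $R$, evaluated under active domain semantics: quantifiers range over $\mathrm{adom}(D)$ together with the constants of the formula, and the output contains $R(\bar a)$ exactly for the tuples $\bar a$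 over this set with $D\models\Phi_R[\bar a]$. $\mathsf{FO}(\mathsf{TI})$ is the class of images of TI-PDBs under FO-views. *)

From HB Require Import structures.
From mathcomp Require Import all_boot all_order all_algebra.
From mathcomp Require Import finmap.
From mathcomp Require Import all_classical all_reals all_analysis.
From mathcomp Require Import Rstruct.

Set Implicit Arguments.
Unset Strict Implicit.
Unset Printing Implicit Defensive.

Import Order.TTheory GRing.Theory Num.Theory.

Definition R : realType := Rdefinitions.R.

Definition U := nat.

(* A schema: a finite nonempty set of relation symbols 'I_(nrel.+1)
   with arities. *)
Record schema := Schema { nrel : nat; arity : 'I_nrel.+1 -> nat }.

Definition sym (tau : schema) := 'I_(nrel tau).+1.

Definition fact (tau : schema) := {Rs : sym tau & (arity Rs).-tuple U}.

Definition instance (tau : schema) := {fset fact tau}.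

Definition adom (tau : schema) (D : instance tau) : seq U :=
  flatten [seq tval (tagged f) | f <- enum_fset D].

Definition isize (tau : schema) (D : instance tau) : nat := #|` D|.

Record pdb (tau : schema) := PDB {
  mass : instance tau -> R;
  mass_ge0 : forall D, (0 <= mass D)%R;
  mass_sum1 : (esum [set: instance tau] (fun D => (mass D)%:E) = 1)%E }.

Local Open Scope classical_set_scope.

Definition prob (tau : schema) (P : pdb tau) (E : set (instance tau)) : R :=
  fine (esum E (fun D => (mass P D)%:E)).

Definition finite_moments (tau : schema) (P : pdb tau) : Prop :=
  forall k : nat, (0 < k)%N ->
    (esum [set: instance tau]
        (fun D => (((isize D)%:R ^+ k * mass P D)%R)%:E) < +oo)%E.

Definition tuple_independent (tau : schema) (P : pdb tau) : Prop :=
  forall F : {fset fact tau},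
    prob P [set D | fsubset F D] =
    (\prod_(f <- enum_fset F) prob P [set D | f \in D])%R.

Inductive term := Var of nat | Const of U.

Inductive formula (tau : schema) :=
  | FEq of term & term
  | FAtom of sym tau & seq term
  | FNot of formula tau
  | FAnd of formula tau & formula tau
  | FOr of formula tau & formula tau
  | FEx of nat & formula tau
  | FAll of nat & formula tau.

Definition term_vars (t : term) : seq nat :=
  match t with Var i => [:: i] | Const _ => [::] end.

Definition term_consts (t : term) : seq U :=
  match t with Var _ => [::] | Const c => [:: c] end.

Fixpoint fv (tau : schema) (phi : formula tau) : seq nat :=
  match phi with
  | FEq t1 t2 => term_vars t1 ++ term_vars t2
  | FAtom _ ts => flatten (map term_vars ts)
  | FNot p => fv p
  | FAnd p q => fv p ++ fv q
  | FOr p q => fv p ++ fv q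
  | FEx i p => seq.filter (fun j => j != i) (fv p)
  | FAll i p => seq.filter (fun j => j != i) (fv p)
  end.

Fixpoint consts (tau : schema) (phi : formula tau) : seq U :=
  match phi with
  | FEq t1 t2 => term_consts t1 ++ term_consts t2
  | FAtom _ ts => flatten (map term_consts ts)
  | FNot p => consts p
  | FAnd p q => consts p ++ consts q
  | FOr p q => consts p ++ consts q
  | FEx _ p => consts p
  | FAll _ p => consts p
  end.

Definition term_eval (env : nat -> U) (t : term) : U :=
  match t with Var i => env i | Const c => c end.

Definition upd (env : nat -> U) (i : nat) (a : U) : nat -> U :=
  fun j => if j == i then a else env j.

(* Satisfaction D |= phi[env], quantifiers ranging over the finite domain
   dom (active domain semantics: dom = adom(D) ++ constants of the formula). *)
Fixpoint sat (tau : schema) (D : instance tau) (dom : seq U)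
    (env : nat -> U) (phi : formula tau) : bool :=
  match phi with
  | FEq t1 t2 => term_eval env t1 == term_eval env t2
  | FAtom Rs ts =>
      has (fun f : fact tau => (tag f == Rs) &&
             (tval (tagged f) == [seq term_eval env t | t <- ts]))
          (enum_fset D)
  | FNot p => ~~ sat D dom env p
  | FAnd p q => sat D dom env p && sat D dom env q
  | FOr p q => sat D dom env p || sat D dom env q
  | FEx i p => has (fun a => sat D dom (upd env i a) p) dom
  | FAll i p => all (fun a => sat D dom (upd env i a) p) dom
  end.

Record fo_view (tau tau' : schema) := FOView {
  Phi : sym tau' -> formula tau;
  Phi_fv : forall Rs : sym tau', all (fun x => (x < arity Rs)%N) (fv (Phi Rs)) }.

Definition tuple_env (s : seq U) : nat -> U := fun i => nth 0%N s i.

Definition view_output (tau tau' : schema) (V : fo_view tau tau')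
    (D : instance tau) (D' : instance tau') : Prop :=
  forall (Rs : sym tau') (t : (arity Rs).-tuple U),
    (Tagged (fun Rs => (arity Rs).-tuple U) t \in D') =
    (let dom := adom D ++ consts (Phi V Rs) in
     all (fun a => a \in dom) t && sat D dom (tuple_env t) (Phi V Rs)).

Definition is_image (tau tau' : schema) (I : pdb tau) (V : fo_view tau tau')
    (P : pdb tau') : Prop :=
  forall D' : instance tau', mass P D' = prob I [set D | view_output V D D'].

Definition in_FO_TI (tau' : schema) (P : pdb tau') : Prop :=
  exists (tau : schema) (I : pdb tau) (V : fo_view tau tau'),
    tuple_independent I /\ is_image I V P.

(* If the facts of a tuple-independent PDB have marginal probabilities p_f,
   then E[2^|D|] = prod (1 + p_f) <= exp (sum p_f), and sum p_f is finite: fix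
   finitely many instances of total mass > 3/4; the facts occurring in none of
   them live in the remaining mass < 1/4, and the second-moment bound
   [s <= 2 Pr(some fact of h is present)] (valid when s = sum_(f in h) p_f <= 1)
   keeps their marginals below 1/2 in total.  Hence Pr(|D| > n) <= C 2^-n.
   An FO-view enlarges instances at most polynomially, so every PDB of FO(TI)
   gives probability at most C 2^-n to each instance with more than a (n+1)^e
   facts.
   The witness gives probability (3/4) 4^-i to one instance with
   2^(floor (sqrt i)) facts.  Its size moments are finite because
   2^(k sqrt i) <= 2^(k^2 + i), but its instance with 2^r facts has
   probability (3/4) 4^-(r^2), which exceeds C 2^-n for n = 2 r^2 + t with
   2^t > 2 C, although 2^r > a (n+1)^e once r is large. *)

From mathcomp Require Import all_boot all_order all_algebra finmap zify.
From mathcomp Require Import all_classical all_reals all_analysis.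
From mathcomp Require Import Rstruct lra.

Set Implicit Arguments.
Unset Strict Implicit.
Unset Printing Implicit Defensive.

Import Order.TTheory GRing.Theory Num.Theory.
Import numFieldNormedType.Exports.

Fixpoint sublists {T : Type} (s : seq T) : seq (seq T) :=
  if s is x :: s' then [seq x :: t | t <- sublists s'] ++ sublists s'
  else [:: [::]].

Lemma sum_sublists_all (T : Type) (a : pred T) (s : seq T) :
  (\sum_(t <- sublists s) all a t = 2 ^ count a s)%N.
Proof.
elim: s => [|x s IH] /=; first by rewrite big_seq1.
rewrite big_cat big_map /= IH.
case: (a x) => /=; last by rewrite big1 // add0n.
by rewrite IH expnS mul2n addnn.
Qed.

Lemma sum_sublists_prod (S : comPzSemiRingType) (T : Type) (s : seq T)
    (p : T -> S) :
  (\sum_(t <- sublists s) \prod_(x <- t) p x = \prod_(x <- s) (1 + p x))%R.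
Proof.
elim: s => [|x s IH] /=; first by rewrite big_seq1 !big_nil.
rewrite big_cat big_map /= big_cons.
under eq_bigr do rewrite big_cons.
by rewrite -big_distrr /= IH mulrDl mul1r addrC.
Qed.

Lemma sublists_subseq (T : eqType) (s t : seq T) :
  t \in sublists s -> subseq t s.
Proof.
elim: s t => [|x s IH] t /=; first by rewrite inE => /eqP ->.
rewrite mem_cat => /orP [/mapP [t' t's ->]|ts].
  by rewrite /= eqxx; apply: IH.
exact: subseq_trans (IH _ ts) (subseq_cons s x).
Qed.

Lemma natr_count (S : pzSemiRingType) (T : Type) (a : pred T) (s : seq T) :
  ((count a s)%:R = \sum_(x <- s) (a x)%:R :> S)%R.
Proof. by elim: s => [|x s IH]; rewrite ?big_nil // big_cons /= natrD IH. Qed.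

Lemma leq_expn2r (m n e : nat) : (m <= n)%N -> (m ^ e <= n ^ e)%N.
Proof. by move=> le_mn; elim: e => // e IH; rewrite !expnS leq_mul. Qed.

Lemma exists_poly_lt_exp2 (a b : nat) : exists r, (a * r.+1 ^ b < 2 ^ r)%N.
Proof.
set y := (a * b.+1 ^ b)%N.
exists (b.+1 * y)%N.
have y_lt : (y.+1 <= 2 ^ y)%N by apply: ltn_expl.
have : (a * (b.+1 * y).+1 ^ b <= y * y.+1 ^ b)%N.
  rewrite /y -mulnA leq_mul2l -expnMn leq_expn2r ?orbT //; lia.
move/leq_ltn_trans; apply.
apply: (@leq_trans (y.+1 ^ b.+1)).
  by rewrite [X in (_ < X)%N]expnS ltn_pmul2r // expn_gt0.
by rewrite mulnC expnM leq_expn2r.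
Qed.

Lemma leq_sumn_map (T : Type) (s : seq T) (F : T -> nat) (M : nat) :
  (forall x, F x <= M)%N -> (sumn (map F s) <= M * size s)%N.
Proof. by move=> F_le; elim: s => //= x s IH; rewrite mulnS leq_add. Qed.

Lemma size_adom (tau : schema) (D : instance tau) :
  (size (adom D) <= (\max_(Rs : sym tau) arity Rs) * #|` D|)%N.
Proof.
rewrite /adom size_flatten /shape -map_comp.
apply: leq_sumn_map => f /=; rewrite size_tuple.
exact: (@leq_bigmax _ (fun Rs : sym tau => arity Rs) (tag f)).
Qed.

Lemma card_facts_over (tau : schema) (L : seq U) (D : instance tau) :
  (forall f, f \in D -> {subset tagged f <= L}) ->
  (#|` D| <= (nrel tau).+1 * (size L).+1 ^ (\max_(Rs : sym tau) arity Rs))%N.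
Proof.
move=> DL.
pose T : finType := {Rs : sym tau & (arity Rs).-tuple 'I_(size L).+1}.
pose decode (x : T) : fact tau := Tagged (fun Rs : sym tau => (arity Rs).-tuple U)
  (map_tuple (fun i : 'I_(size L).+1 => nth 0%N L i) (tagged x)).
have sub : (D `<=` seq_fset tt (map decode (enum T)))%fset.
  apply/fsubsetP => -[Rs t] ft; rewrite seq_fsetE; apply/mapP.
  exists (Tagged (fun Rs : sym tau => (arity Rs).-tuple 'I_(size L).+1)
            (map_tuple (fun a => inord (index a L)) t)); first by rewrite mem_enum.
  rewrite /decode /=; congr Tagged; apply: val_inj => /=.
  rewrite -map_comp; apply/esym; apply: map_id_in => a ta /=.
  have aL : a \in L by exact: DL _ ft _ ta.
  by rewrite inordK ?nth_index // ltnS ltnW // index_mem.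
apply: (leq_trans (fsubset_leq_card sub)).
rewrite size_seq_fset (leq_trans (size_undup _)) // size_map -cardE card_tagged.
apply: leq_trans (leq_sumn_map _ (M := (size L).+1 ^ _) _) _; last first.
  by rewrite size_enum_ord mulnC.
move=> Rs; rewrite card_tuple card_ord leq_pexp2l //.
exact: (@leq_bigmax _ (fun Rs : sym tau => arity Rs) Rs).
Qed.

Lemma view_output_card (tau tau' : schema) (V : fo_view tau tau') :
  exists a e : nat, forall D D', view_output V D D' ->
    (#|` D'| <= a * (#|` D|).+1 ^ e)%N.
Proof.
set C := flatten [seq consts (Phi V Rs) | Rs <- enum 'I_(nrel tau').+1].
set A := \max_(Rs : sym tau) arity Rs.
set e := \max_(Rs : sym tau') arity Rs.
exists ((nrel tau').+1 * (A + size C).+1 ^ e)%N, e => D D' VDD'.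
have : (#|` D'| <= (nrel tau').+1 * (size (adom D ++ C)).+1 ^ e)%N.
  apply: card_facts_over => -[Rs t] ft a ta.
  have := VDD' Rs t; rewrite ft => /esym /andP [/allP /(_ a ta) + _].
  rewrite !mem_cat => /orP [->//|aPhi]; apply/orP; right.
  by apply/flatten_mapP; exists Rs; rewrite ?mem_enum.
move/leq_trans; apply; rewrite -mulnA leq_mul2l -expnMn leq_expn2r ?orbT //.
have := size_adom D; rewrite size_cat -/A; nia.
Qed.

Local Open Scope classical_set_scope.
Local Open Scope ring_scope.

Section Expectation.
Variables (tau : schema) (I : pdb tau).
Local Notation inst := (instance tau).

Lemma esum_mass_le1 (A : set inst) : (esum A (fun D => (mass I D)%:E) <= 1)%E.
Proof.
rewrite esum_mkcond -(mass_sum1 I); apply: le_esum => D _.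
by case: ifP => _ //; rewrite lee_fin mass_ge0.
Qed.

Lemma esum_mass_prob (A : set inst) :
  esum A (fun D => (mass I D)%:E) = (prob I A)%:E.
Proof.
rewrite /prob fineK // ge0_fin_numE; last first.
  by apply: esum_ge0 => D _; rewrite lee_fin mass_ge0.
by apply: le_lt_trans (esum_mass_le1 A) _; rewrite ltry.
Qed.

Lemma prob_ge0 (A : set inst) : 0 <= prob I A.
Proof.
by rewrite -lee_fin -esum_mass_prob; apply: esum_ge0 => D _; rewrite lee_fin mass_ge0.
Qed.

Lemma prob_le1 (A : set inst) : prob I A <= 1.
Proof. by rewrite -lee_fin -esum_mass_prob esum_mass_le1. Qed.

Lemma le_prob (A B : set inst) : A `<=` B -> prob I A <= prob I B.
Proof.
move=> AB; rewrite -lee_fin -!esum_mass_prob esum_mkcond [leRHS]esum_mkcond.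
apply: le_esum => D _; case: ifP => DA; first by rewrite (mem_set (AB _ (set_mem DA))).
by case: ifP => _; rewrite ?lee_fin ?mass_ge0.
Qed.

Lemma exists_fset_prob_gt (r : R) : r < 1 ->
  exists A : {fset inst}, r < prob I [set D | D \in A].
Proof.
move=> r_lt1.
have : (r%:E < esum [set: inst] (fun D => (mass I D)%:E))%E by rewrite mass_sum1 lte_fin.
case/ereal_sup_gt => _ [A [finA _] <-] rA; exists (fset_set A).
rewrite -lte_fin -esum_mass_prob; apply: lt_le_trans rA _; apply: esum_ge.
by exists A => //; split => // D AD /=; rewrite in_fset_set // mem_set.
Qed.

Lemma prob_le_of_fsum (A : set inst) (r : R) :
  (forall B : {fset inst}, [set` B] `<=` A -> \sum_(D <- B) mass I D <= r) ->
  prob I A <= r.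
Proof.
move=> Br; rewrite -lee_fin -esum_mass_prob.
apply: ge_ereal_sup => _ [X [finX XA] <-].
rewrite fsbig_finite //= sumEFin lee_fin; apply: Br => D /=.
by rewrite in_fset_set // inE; apply: XA.
Qed.

Definition expect (X : inst -> R) :=
  esum [set: inst] (fun D => (X D * mass I D)%:E).

Lemma le_expect_fsum (B : {fset inst}) (X : inst -> R) :
  (forall D, 0 <= X D) ->
  ((\sum_(D <- B) X D * mass I D)%:E <= expect X)%E.
Proof.
move=> X0; rewrite -sumEFin; apply: esum_ge; exists [set` B].
  by split => //; apply: finite_fset.
by rewrite fsbig_finite ?finite_fset // set_fsetK.
Qed.

Lemma expect_indicator (b : pred inst) :
  expect (fun D => (b D)%:R) = (prob I [set D | b D])%:E.
Proof.
rewrite -esum_mass_prob esum_mkcond; apply: eq_esum => D _.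
case: (boolP (b D)) => bD; first by rewrite mem_set // mul1r.
by rewrite memNset ?mul0r //= => bD'; move: bD; rewrite bD'.
Qed.

Lemma expect1 : expect (fun=> 1) = 1%E.
Proof. by rewrite -(mass_sum1 I); apply: eq_esum => D _; rewrite mul1r. Qed.

Lemma le_expect (X Y : inst -> R) :
  (forall D, X D <= Y D) -> (expect X <= expect Y)%E.
Proof.
by move=> XY; apply: le_esum => D _; rewrite lee_fin ler_wpM2r ?mass_ge0.
Qed.

Lemma expectD (X Y : inst -> R) :
  (forall D, 0 <= X D) -> (forall D, 0 <= Y D) ->
  expect (fun D => X D + Y D) = (expect X + expect Y)%E.
Proof.
move=> X0 Y0; rewrite /expect -esumD => [|D _|D _]; last 2 first.
- by rewrite lee_fin mulr_ge0 ?mass_ge0.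
- by rewrite lee_fin mulr_ge0 ?mass_ge0.
by apply: eq_esum => D _; rewrite mulrDl EFinD.
Qed.

Lemma expect_sum (T : Type) (s : seq T) (X : T -> inst -> R) :
  (forall i D, 0 <= X i D) ->
  expect (fun D => \sum_(i <- s) X i D) = (\sum_(i <- s) expect (X i))%E.
Proof.
move=> X0; elim: s => [|x s IH].
  by rewrite big_nil; apply: esum1 => D _; rewrite big_nil mul0r.
under [X in expect X]funext do rewrite big_cons.
by rewrite expectD ?IH ?big_cons // => D; apply: sumr_ge0.
Qed.

Lemma prob_disjoint_le1 (b1 b2 : pred inst) : (forall D, b1 D -> ~~ b2 D) ->
  prob I [set D | b1 D] + prob I [set D | b2 D] <= 1.
Proof.
move=> b12; rewrite -lee_fin EFinD -!expect_indicator -expect1.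
rewrite -expectD => [|D|D]; rewrite ?ler0n //; apply: le_expect => D.
by case: (boolP (b1 D)) => [/b12/negPf -> | _]; rewrite ?addr0 ?add0r // lern1 leq_b1.
Qed.

End Expectation.

Section TupleIndependent.
Variables (tau : schema) (I : pdb tau).
Hypothesis I_TI : tuple_independent I.
Local Notation inst := (instance tau).

Definition marg (f : fact tau) : R := prob I [set D | f \in D].

Lemma prob_all_mem (s : seq (fact tau)) : uniq s ->
  prob I [set D | all (fun f => f \in D) s] = \prod_(f <- s) marg f.
Proof.
move=> s_uniq; have := I_TI (seq_fset tt s).
have := seq_fsetE tt s; have := seq_fset_perm tt s; rewrite undup_id //.
move: (seq_fset tt s) => F F_perm F_s.
have -> : [set D | fsubset F D] = [set D : inst | all (fun f => f \in D) s].
  apply/seteqP; split => D /=.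
    by move/fsubsetP => FD; apply/allP => f fs; apply: FD; rewrite F_s.
  by move/allP => sD; apply/fsubsetP => f; rewrite F_s => /sD.
by move=> ->; apply: perm_big.
Qed.

Lemma marg_ge0 (f : fact tau) : 0 <= marg f.
Proof. exact: prob_ge0. Qed.

Lemma expect_mem_mul (f g : fact tau) :
  expect I (fun D => (f \in D)%:R * (g \in D)%:R) =
  (if f == g then marg f else marg f * marg g)%:E.
Proof.
have [<-|fg] := eqVneq f g.
  have -> : (fun D : inst => (f \in D)%:R * (f \in D)%:R : R) =
            (fun D => (f \in D)%:R).
    by apply: funext => D; rewrite -natrM mulnb andbb.
  exact: expect_indicator.
have -> : (fun D : inst => (f \in D)%:R * (g \in D)%:R : R) =
          (fun D => (all (fun x => x \in D) [:: f; g])%:R).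
  by apply: funext => D /=; rewrite andbT -natrM mulnb.
rewrite expect_indicator prob_all_mem /=; last by rewrite inE fg.
by rewrite big_cons big_seq1.
Qed.

Lemma expect_count (h : seq (fact tau)) :
  expect I (fun D => (count (fun f => f \in D) h)%:R) = (\sum_(f <- h) marg f)%:E.
Proof.
have -> : (fun D => (count (fun f => f \in D) h)%:R : R) =
          (fun D : inst => \sum_(f <- h) (f \in D)%:R).
  by apply: funext => D; apply: natr_count.
rewrite expect_sum => [|f D]; last exact: ler0n.
by rewrite -sumEFin; apply: eq_bigr => f _; rewrite expect_indicator.
Qed.

Lemma expect_count_sqr (h : seq (fact tau)) : uniq h ->
  (expect I (fun D => (count (fun f => f \in D) h)%:R ^+ 2)%R <=
   (\sum_(f <- h) marg f + (\sum_(f <- h) marg f) ^+ 2)%:E)%E.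
Proof.
move=> h_uniq.
have ind_mul_ge0 (f g : fact tau) (D : inst) : 0 <= (f \in D)%:R * (g \in D)%:R :> R.
  by rewrite mulr_ge0.
have -> : (fun D => (count (fun f => f \in D) h)%:R ^+ 2 : R) =
    (fun D : inst => \sum_(f <- h) \sum_(g <- h) (f \in D)%:R * (g \in D)%:R).
  apply: funext => D; rewrite natr_count expr2 mulr_suml.
  by apply: eq_bigr => f _; rewrite mulr_sumr.
rewrite expect_sum => [|f D]; last by apply: sumr_ge0 => g _.
under eq_bigr do rewrite expect_sum //.
under eq_bigr do under eq_bigr do rewrite expect_mem_mul.
under eq_bigr do rewrite sumEFin.
rewrite sumEFin lee_fin expr2 mulr_suml -big_split /= big_seq [leRHS]big_seq.
apply: ler_sum => f fh; rewrite (bigD1_seq f fh h_uniq) /= eqxx lerD2l.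
rewrite mulr_sumr [leRHS](bigID (fun g => g != f)) /= -[leLHS]addr0 lerD //.
  by apply: ler_sum => g /negPf; rewrite eq_sym => ->.
by apply: sumr_ge0 => g _; rewrite mulr_ge0 ?marg_ge0.
Qed.

Lemma sum_marg_le_2prob_has (h : seq (fact tau)) : uniq h ->
  \sum_(f <- h) marg f <= 1 ->
  \sum_(f <- h) marg f <= 2 * prob I [set D | has (fun f => f \in D) h].
Proof.
move=> h_uniq s_le1.
pose c (D : inst) : R := (count (fun f => f \in D) h)%:R.
pose b (D : inst) : R := (has (fun f => f \in D) h)%:R.
have c0 (D : inst) : 0 <= c D by [].
have b0 (D : inst) : 0 <= b D by [].
(* Taking expectations: 3 s <= 2 Pr(has h) + E[c^2] <= 2 Pr(has h) + s + s^2. *)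
have pointwise (D : inst) : c D + c D + c D <= b D + b D + c D ^+ 2.
  rewrite /c /b has_count -natrX -!natrD ler_nat.
  by case: (count _ h) => [|n] //=; nia.
have := le_expect I pointwise.
rewrite (@expectD _ I (fun D => c D + c D)) ?expectD ?expect_count ?expect_indicator //;
  last 3 first.
1-3: by move=> D; rewrite ?addr_ge0 ?sqr_ge0.
move/le_trans => /(_ _ (leeD2l _ (expect_count_sqr h_uniq))).
rewrite -!EFinD lee_fin.
have s0 : 0 <= \sum_(f <- h) marg f by apply: sumr_ge0 => f _; apply: marg_ge0.
nra.
Qed.

Lemma sum_marg_lt_half (Q : pred (fact tau)) :
  (forall h, all Q h -> prob I [set D | has (fun f => f \in D) h] < 1/4) ->
  forall h, uniq h -> all Q h -> \sum_(f <- h) marg f < 1/2.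
Proof.
move=> Q_small; elim => [|x h IH] /=; first by rewrite big_nil; lra.
move=> /andP [xh h_uniq] /andP [Qx Qh].
have x_small : marg x < 1/4.
  apply: le_lt_trans (Q_small [:: x] _); last by rewrite /= Qx.
  by apply: le_prob => D /=; rewrite orbF.
have h_half := IH h_uniq Qh.
have xh_small := Q_small (x :: h); rewrite /= Qx Qh in xh_small.
have := @sum_marg_le_2prob_has (x :: h); rewrite /= xh h_uniq big_cons.
move=> /(_ isT); lra.
Qed.

Lemma sum_marg_bounded :
  exists L : R, forall g, uniq g -> \sum_(f <- g) marg f <= L.
Proof.
have [A A_large] : exists A : {fset inst}, 3/4 < prob I [set D | D \in A].
  by apply: exists_fset_prob_gt; lra.
set S := flatten [seq enum_fset D | D <- A].
have S_small h : all (fun f => f \notin S) h ->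
    prob I [set D | has (fun f => f \in D) h] < 1/4.
  move=> hS; suff : prob I [set D | has (fun f => f \in D) h] +
                    prob I [set D | D \in A] <= 1 by lra.
  apply: prob_disjoint_le1 => D /hasP [f fh fD]; apply/negP => DA.
  move/allP: hS => /(_ f fh) /negP; apply.
  by apply/(@flatten_mapP _ _ (fun D : inst => enum_fset D)); exists D.
exists ((size S)%:R + 1/2) => g g_uniq.
rewrite (bigID (fun f => f \in S)) /=; apply: lerD.
  apply: le_trans (_ : _ <= (count (fun f => f \in S) g)%:R) _.
    by rewrite -sum1_count natr_sum; apply: ler_sum => f _; apply: prob_le1.
  rewrite ler_nat -size_filter uniq_leq_size ?filter_uniq // => f.
  by rewrite mem_filter => /andP [].
rewrite -big_filter; apply/ltW/(sum_marg_lt_half S_small).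
  exact: filter_uniq.
exact: filter_all.
Qed.

Lemma expect_exp2_count (g : seq (fact tau)) : uniq g ->
  expect I (fun D => (2 ^ count (fun f => f \in D) g)%:R) =
  (\prod_(f <- g) (1 + marg f))%:E.
Proof.
move=> g_uniq.
have -> : (fun D => (2 ^ count (fun f => f \in D) g)%:R : R) =
          (fun D : inst => \sum_(s <- sublists g) (all (fun f => f \in D) s)%:R).
  by apply: funext => D; rewrite -sum_sublists_all natr_sum.
rewrite expect_sum => [|s D]; last exact: ler0n.
rewrite -sum_sublists_prod -sumEFin big_seq [RHS]big_seq.
apply: eq_bigr => s s_sub; rewrite expect_indicator prob_all_mem //.
exact: subseq_uniq (sublists_subseq s_sub) g_uniq.
Qed.

(* Markov's inequality for 2^(number of facts of D in g), whose expectation is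
   prod (1 + marg f) <= exp (sum marg f). *)
Lemma prob_isize_gt_le :
  exists C : R, forall n, prob I [set D | (n < isize D)%N] <= C / (2 ^ n)%:R.
Proof.
have [L L_bound] := sum_marg_bounded.
exists (expR L) => n; apply: prob_le_of_fsum => B B_big.
set g := undup (flatten [seq enum_fset D | D <- B]).
have count_ge D : D \in B -> (n <= count (fun f => f \in D) g)%N.
  move=> DB; apply: leq_trans (ltnW (B_big _ DB)) _.
  rewrite /isize -size_filter uniq_leq_size ?fset_uniq // => f fD.
  rewrite mem_filter fD mem_undup.
  by apply/(@flatten_mapP _ _ (fun D : inst => enum_fset D)); exists D.
rewrite ler_pdivlMr ?ltr0n ?expn_gt0 // mulr_suml.
apply: le_trans (_ : _ <= \sum_(D <- B) (2 ^ count (fun f => f \in D) g)%:R * mass I D) _.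
  rewrite big_seq [leRHS]big_seq; apply: ler_sum => D DB.
  by rewrite mulrC ler_wpM2r ?mass_ge0 // ler_nat leq_exp2l // count_ge.
rewrite -lee_fin; apply: le_trans (le_expect_fsum _ _ _) _ => [D|]; first exact: ler0n.
rewrite expect_exp2_count ?undup_uniq // lee_fin.
apply: le_trans (_ : _ <= \prod_(f <- g) expR (marg f)) _.
  by apply: ler_prod => f _; rewrite addr_ge0 ?marg_ge0 // expR_ge1Dx.
by rewrite -expR_sum ler_expR L_bound ?undup_uniq.
Qed.

End TupleIndependent.

Lemma FO_TI_mass_le (tau : schema) (P : pdb tau) : in_FO_TI P ->
  exists (C : R) (a e : nat), forall n (D : instance tau),
    (a * n.+1 ^ e < #|` D|)%N -> mass P D <= C / (2 ^ n)%:R.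
Proof.
case=> sigma [I [V [I_TI P_img]]].
have [C C_tail] := prob_isize_gt_le I_TI.
have [a [e V_card]] := view_output_card V.
exists C, a, e => n D D_big; rewrite P_img.
apply: le_trans (C_tail n); apply: le_prob => D0 /= VD0D.
rewrite ltnNge; apply: contraTN D_big => D0_small; rewrite -leqNgt.
by apply: leq_trans (V_card _ _ VD0D) _; rewrite leq_mul2l leq_expn2r ?orbT.
Qed.

Lemma exists_exp2_gt (x : R) : exists t, x < (2 ^ t)%:R.
Proof.
exists (Num.Def.archi_bound `|x|).
apply: le_lt_trans (ler_norm x) (lt_le_trans (archi_boundP (normr_ge0 x)) _).
by rewrite ler_nat ltnW // ltn_expl.
Qed.

Lemma lim_series_EFin (f : nat -> R) (l : R) : series f @ \oo --> l ->
  (\sum_(i <oo) (f i)%:E = l%:E)%E.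
Proof.
move=> f_l; apply: cvg_lim => //.
apply: cvg_EFin; first by apply: nearW => n /=; rewrite sumEFin.
rewrite [X in X @ _ --> _](_ : _ = series f) //.
by apply/funext => n; rewrite /= sumEFin.
Qed.

Definition tau0 : schema := @Schema 0 (fun=> 2%N).

Definition mkfact (i x : nat) : fact tau0 :=
  existT (fun Rs : sym tau0 => (arity Rs).-tuple U) ord0 [tuple i; x].

Definition fact_fst (f : fact tau0) : nat := nth 0%N (tagged f) 0.
Definition fact_snd (f : fact tau0) : nat := nth 0%N (tagged f) 1.

Definition inst0 (i : nat) : instance tau0 :=
  seq_fset tt (map (mkfact i) (iota 0 (2 ^ Nat.sqrt i))).

Lemma card_inst0 i : #|` inst0 i| = (2 ^ Nat.sqrt i)%N.
Proof.
rewrite size_seq_fset undup_id ?size_map ?size_iota //.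
by rewrite map_inj_uniq ?iota_uniq // => x y /(congr1 fact_snd).
Qed.

Lemma card_inst0_sqr r : #|` inst0 (r * r)| = (2 ^ r)%N.
Proof. by rewrite card_inst0 PeanoNat.Nat.sqrt_square. Qed.

Definition inst0_index (D : instance tau0) : nat :=
  if enum_fset D is f :: _ then fact_fst f else 0%N.

Lemma inst0K : cancel inst0 inst0_index.
Proof.
move=> i; rewrite /inst0_index; case E: (enum_fset (inst0 i)) => [|f s].
  by have := card_inst0 i; rewrite E /= => /esym /eqP; rewrite expn_eq0.
have : f \in inst0 i by rewrite -[f \in _]/(f \in enum_fset (inst0 i)) E mem_head.
by rewrite seq_fsetE => /mapP [x _ ->].
Qed.

Definition mass0 (D : instance tau0) : R :=
  if D == inst0 (inst0_index D) then 3/4 * (1/4) ^+ inst0_index D else 0.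

Lemma mass0_inst0 i : mass0 (inst0 i) = 3/4 * (1/4) ^+ i.
Proof. by rewrite /mass0 inst0K eqxx. Qed.

Lemma mass0_ge0 D : 0 <= mass0 D.
Proof. by rewrite /mass0; case: ifP => _ //; rewrite mulr_ge0 ?exprn_ge0. Qed.

Lemma esum_inst0 (F : instance tau0 -> R) : (forall D, 0 <= F D) ->
  (forall D, D \notin range inst0 -> F D = 0) ->
  (esum [set: instance tau0] (fun D => (F D)%:E) = \sum_(i <oo) (F (inst0 i))%:E)%E.
Proof.
move=> F0 F_out; rewrite (esumID (range inst0)); last by move=> D _; rewrite lee_fin.
rewrite [X in (_ + X)%E]esum1 ?adde0; last first.
  by move=> D [_ /= D_out]; rewrite F_out // notin_setE.
rewrite setTI esum_image; last by move=> i j _ _; apply: (can_inj inst0K).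
by rewrite nneseries_esumT // => n; rewrite lee_fin.
Qed.

Lemma mass0_out D : D \notin range inst0 -> mass0 D = 0.
Proof.
rewrite notin_setE /mass0 => D_out; case: eqP => // DE.
by case: D_out; exists (inst0_index D).
Qed.

Lemma mass0_sum1 : (esum [set: instance tau0] (fun D => (mass0 D)%:E) = 1)%E.
Proof.
rewrite esum_inst0; [|exact: mass0_ge0|exact: mass0_out].
under eq_eseriesr do rewrite mass0_inst0.
have : series (geometric (3/4 : R) (1/4)) @ \oo --> (3/4 * (1 - 1/4)^-1 : R).
  by apply: cvg_geometric_series; rewrite ger0_norm; lra.
move/lim_series_EFin => ->; congr EFin.
by rewrite (_ : 1 - 1/4 = 3/4) ?mulfV //; lra.
Qed.

Definition P0 : pdb tau0 := PDB mass0_ge0 mass0_sum1.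

Lemma moment_inst0_le (k i : nat) :
  (#|` inst0 i|)%:R ^+ k * mass0 (inst0 i) <= 3/4 * (2 ^ (k * k))%:R * (1/2) ^+ i.
Proof.
rewrite card_inst0 mass0_inst0 mulrCA -mulrA ler_pM2l; last lra.
have -> : (1/2) ^+ i = (2 ^ i)%:R * (1/4) ^+ i :> R.
  by rewrite natrX -exprMn; congr (_ ^+ _); lra.
rewrite mulrA ler_pM2r; last by rewrite exprn_gt0 //; lra.
rewrite -natrX -natrM ler_nat -expnM -expnD leq_exp2l //.
have : (Nat.sqrt i * Nat.sqrt i <= i)%N.
  by have [+ _] := PeanoNat.Nat.sqrt_spec' i; lia.
move: (Nat.sqrt i) => s; nia.
Qed.

Lemma P0_finite_moments : finite_moments P0.
Proof.
move=> k _; set c : R := 3/4 * (2 ^ (k * k))%:R.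
have F0 D : 0 <= (isize D)%:R ^+ k * mass0 D by rewrite mulr_ge0 ?mass0_ge0.
rewrite [X in (X < _)%E](esum_inst0 F0); last by move=> D /mass0_out ->; rewrite mulr0.
have : series (geometric c (1/2)) @ \oo --> (c * (1 - 1/2)^-1 : R).
  by apply: cvg_geometric_series; rewrite ger0_norm; lra.
move/lim_series_EFin => c_sum; apply: le_lt_trans (_ : _ <= (c * (1 - 1/2)^-1)%:E)%E _.
  rewrite -c_sum; apply: lee_nneseries => i _; first by rewrite lee_fin.
  by rewrite lee_fin moment_inst0_le.
by rewrite ltry.
Qed.

Lemma P0_not_FO_TI : ~ in_FO_TI P0.
Proof.
case/FO_TI_mass_le => C [a [e P0_le]].
have [t Ct] : exists t, 2 * C < (2 ^ t)%:R by apply: exists_exp2_gt.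
have [r r_big] := exists_poly_lt_exp2 (a * (t + 3) ^ e) (2 * e).
have poly_lt : (a * (2 * (r * r) + t).+1 ^ e < 2 ^ r)%N.
  apply: leq_ltn_trans r_big; rewrite -mulnA leq_mul2l mulnC expnM -expnMn.
  by rewrite leq_expn2r ?orbT //; nia.
have := P0_le (2 * (r * r) + t)%N (inst0 (r * r)).
rewrite card_inst0_sqr /= mass0_inst0 => /(_ poly_lt).
rewrite expnD natrM; set X := (2 ^ _)%:R; set T := (2 ^ t)%:R; set y := _ ^+ _.
have X0 : 0 < X by rewrite ltr0n expn_gt0.
have T0 : 0 < T by rewrite ltr0n expn_gt0.
have Xy : X * y = 1.
  rewrite /X /y expnM (_ : (2 ^ 2 = 4)%N) // natrX -exprMn.
  by rewrite (_ : 4%:R * (1/4) = 1 :> R) ?expr1n //; lra.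
move/(ler_wpM2r (ltW (mulr_gt0 X0 T0))); rewrite divfK ?mulf_neq0 ?gt_eqF //.
nra.
Qed.

Theorem theorem3p9 :
  exists (tau : schema) (P : pdb tau), finite_moments P /\ ~ in_FO_TI P.
Proof. by exists tau0, P0; split; [exact: P0_finite_moments | exact: P0_not_FO_TI]. Qed.
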